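(* Let $G$ be a graph whose minimum degree is $3$. Then $\mu(G)\leq 3$.
   Context: Multi-graphs have no self-loops; the skeleton of a multi-graph is its underlying simple graph. Each edge $e$ between $u$ and $v$ consists of two half-edges $e_u$ and $e_v$. A half-edge colouring is a function $c$ from the set of half-edges to $\mathbb{N}_0$; each edge $e$ also gets a weight $w(e)\in\mathbb{C}$. The weight of a perfect matching $P$ is $\prod_{e\in P}w(e)$. A vertex colouring is a map $vc:V\to\mathbb{N}_0$; it filters out the subgraph consisting of all edges $e$ (between $u,v$) with $c(e_u)=vc(u)$ and $c(e_v)=vc(v)$ (with the same weights). The weight of $vc$ is the sum of the weights of all perfect matchings of this filtered subgraph; $vc$ is feasible if the filtered subgraph has at least one perfect matching (an infeasible colouring has weight $0$). An edge-coloured edge-weighted multi-graph is GHZ if every feasible monochromatic vertex colouring has weight $1$ and every non-monochromatic vertex colouring has weight $0$; its dimension is the number of feasible monochromatic vertex colourings. For a simple graph $G$, the matching index $\mu(G)$ is the maximum (possibly $\infty$) of the dimension over all GHZ edge-coloured edge-weighted multi-graphs whose skeleton is $G$. *)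

From mathcomp Require Import all_boot all_algebra.
From mathcomp Require Import complex.
From mathcomp Require Import Rstruct.

Set Implicit Arguments.
Unset Strict Implicit.
Unset Printing Implicit Defensive.

Import GRing.Theory.
Local Open Scope ring_scope.

Notation Cplx := (Rdefinitions.R[i]).

Definition simple_graph (V : finType) (g : rel V) : Prop :=
  symmetric g /\ irreflexive g.

Definition degree (V : finType) (g : rel V) (v : V) : nat := #|[set u | g v u]|.

Definition min_degree_is (V : finType) (g : rel V) (k : nat) : Prop :=
  (forall v, k <= degree g v)%N /\ exists v, degree g v = k.

(** Multi-graphs on vertex set V: a finite type E of edges, each edge x
    having endpoints [ends x = (u, v)] with u <> v (no self-loops).
    The half-edges of x are (x, false) at (ends x).1 and (x, true) at
    (ends x).2. *)
Definition no_self_loops (V E : finType) (ends : E -> V * V) : Prop :=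
  forall x, (ends x).1 != (ends x).2.

Definition skeleton_is (V E : finType) (ends : E -> V * V) (g : rel V) : Prop :=
  forall u v, g u v = [exists x, (ends x == (u, v)) || (ends x == (v, u))].

Section Colourings.
Variables (V E : finType) (ends : E -> V * V).
Variables (c : E -> bool -> nat) (w : E -> Cplx).

Definition incident (v : V) (x : E) : bool :=
  ((ends x).1 == v) || ((ends x).2 == v).

Definition kept (vc : V -> nat) (x : E) : bool :=
  (c x false == vc (ends x).1) && (c x true == vc (ends x).2).

Definition perfect_matching (vc : V -> nat) (P : {set E}) : bool :=
  [forall x in P, kept vc x] &&
  [forall v : V, #|[set x in P | incident v x]| == 1%N].

Definition matching_weight (P : {set E}) : Cplx := \prod_(x in P) w x.

Definition vc_weight (vc : V -> nat) : Cplx :=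
  \sum_(P : {set E} | perfect_matching vc P) matching_weight P.

Definition feasible (vc : V -> nat) : bool :=
  [exists P : {set E}, perfect_matching vc P].

Definition monochromatic (vc : V -> nat) : Prop := forall u v, vc u = vc v.

Definition GHZ : Prop :=
  (forall vc : V -> nat, monochromatic vc -> feasible vc -> vc_weight vc = 1) /\
  (forall vc : V -> nat, ~ monochromatic vc -> vc_weight vc = 0).

Definition max_colour : nat := \max_(x : E) maxn (c x false) (c x true).

(* dimension = number of feasible monochromatic vertex colourings,
   i.e. number of colours k such that the constant colouring k is feasible.
   Such k are the colours of half-edges, hence <= max_colour. *)
Definition dimension : nat :=
  size [seq k <- iota 0 max_colour.+1 | feasible (fun _ => k)].

End Colourings.

From mathcomp Require Import all_boot all_algebra ring zify.
From mathcomp Require Import complex Rstruct.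

(* Let v be a vertex of degree 3 with neighbours a, b, c, and suppose four colours
   s_0, ..., s_3 have feasible monochromatic colourings.  Splitting a perfect
   matching at its edge through v writes the weight of a vertex colouring as
   sum_y G_y * L_y(colour of v, colour of y) over y in {a, b, c}, where L_y collects
   the edges vy and G_y, a sum over perfect matchings of G - v - y, ignores the
   colours of v and y.  Colour every other vertex s_k0 and sum the weights of the
   colourings giving v, a, b, c the colours s_jv, s_ja, s_jb, s_jc, with coefficient
   hA(ja) hB(jb) hC(jc).  If each h_y is orthogonal to j |-> sum_jv L_y(s_jv, s_j),
   every term of the decomposition cancels and the total is 0.  By the GHZ property
   only monochromatic colourings contribute, so if hA hB hC vanishes off k0 the
   total is hA(k0) hB(k0) hC(k0).  In dimension 4 such vectors with a nonzero value
   at k0 exist: each h_y is supported on k0 and one partner index, and k0 and the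
   partners can be chosen so that the three supports meet only in k0. *)

Set Implicit Arguments.
Unset Strict Implicit.
Unset Printing Implicit Defensive.

Import GRing.Theory.
Local Open Scope ring_scope.

Section Star.
Variables (V E : finType) (ends : E -> V * V) (c : E -> bool -> nat) (w : E -> Cplx).
Variable v : V.

Definition deg_in (P : {set E}) (u : V) : nat := #|[set x in P | incident ends u x]|.

Definition covers_once (P : {set E}) : bool := [forall u, deg_in P u == 1%N].

Definition residual_matching (y : V) (Q : {set E}) : bool :=
  [forall u, deg_in Q u == ((u != v) && (u != y))].

Definition kept_weight (vc : V -> nat) (x : E) : Cplx := if kept ends c vc x then w x else 0.

Definition residual_weight (y : V) (vc : V -> nat) : Cplx :=
  \sum_(Q | residual_matching y Q) \prod_(x in Q) kept_weight vc x.

Definition other (x : E) : V := if (ends x).1 == v then (ends x).2 else (ends x).1.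

(* For [x] incident to [v], the half-edge of [x] at [v] is [(x, vside x)]. *)
Definition vside (x : E) : bool := (ends x).1 != v.

Definition link (y : V) (kv ky : nat) : Cplx :=
  \sum_(x | incident ends v x && (other x == y))
    w x * (c x (vside x) == kv)%:R * (c x (~~ vside x) == ky)%:R.

Lemma vc_weight_covers vc :
  vc_weight ends c w vc = \sum_(P | covers_once P) \prod_(x in P) kept_weight vc x.
Proof.
rewrite /vc_weight big_mkcond [RHS]big_mkcond; apply: eq_bigr => P _.
have -> : perfect_matching ends c vc P = [forall x in P, kept ends c vc x] && covers_once P.
  by [].
case: (covers_once P); rewrite ?andbF ?andbT //.
case: (boolP [forall x in P, kept ends c vc x]) => [keptP | /forall_inPn [x xP nkx]].
  by apply: eq_bigr => x xP; rewrite /kept_weight (forall_inP keptP x xP).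
by rewrite (bigD1 x xP) /= /kept_weight (negbTE nkx) mul0r.
Qed.

Lemma covers_once_at_v (F : {set E} -> Cplx) :
  \sum_(P | covers_once P) F P =
  \sum_(x | incident ends v x) \sum_(P | covers_once P && (x \in P)) F P.
Proof.
under [RHS]eq_bigr do rewrite big_mkcondr.
rewrite exchange_big /=; apply: eq_bigr => P /forallP /(_ v) /eqP degv.
rewrite -big_mkcondr /= sumr_const.
suff -> : #|[pred x | incident ends v x && (x \in P)]| = 1%N by [].
by rewrite -degv; apply: eq_card => x; rewrite !inE andbC.
Qed.

Lemma incident_other x u :
  incident ends v x -> incident ends u x = (u == v) || (u == other x).
Proof.
rewrite /incident /other; case: eqP => [<- _ | _ /= /eqP <-].
  by rewrite !(eq_sym u).
by rewrite orbC !(eq_sym u).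
Qed.

Lemma deg_in_setU1 x (Q : {set E}) u :
  x \notin Q -> deg_in (x |: Q) u = (incident ends u x + deg_in Q u)%N.
Proof.
move=> xQ; rewrite /deg_in; case: (boolP (incident ends u x)) => ux.
  have -> : [set z in x |: Q | incident ends u z] = x |: [set z in Q | incident ends u z].
    by apply/setP => z; rewrite !inE; case: eqP => // ->; rewrite ux.
  by rewrite cardsU1 inE (negbTE xQ).
rewrite add0n; apply: eq_card => z; rewrite !inE.
by case: eqP => // ->; rewrite (negbTE ux) (negbTE xQ).
Qed.

Lemma deg_in0 (P : {set E}) u x : deg_in P u = 0%N -> x \in P -> ~~ incident ends u x.
Proof.
move=> /eqP; rewrite cards_eq0 => /eqP P0 xP; apply/negP => ux.
by have := in_set0 x; rewrite -P0 inE xP ux.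
Qed.

Lemma residual_matching_notin x (Q : {set E}) :
  incident ends v x -> residual_matching (other x) Q -> x \notin Q.
Proof.
move=> vx /forallP /(_ v); rewrite eqxx /= => /eqP degv.
by apply/negP => /(deg_in0 degv); rewrite vx.
Qed.

Lemma covers_once_setU1 x (Q : {set E}) :
  incident ends v x -> x \notin Q ->
  covers_once (x |: Q) = residual_matching (other x) Q.
Proof.
move=> vx xQ; apply: eq_forallb => u.
rewrite deg_in_setU1 // (incident_other _ vx) -negb_or.
by case: (_ || _); rewrite ?add1n ?add0n ?eqSS.
Qed.

Lemma covers_once_through x vc :
  incident ends v x ->
  \sum_(P | covers_once P && (x \in P)) \prod_(z in P) kept_weight vc z =
  kept_weight vc x * residual_weight (other x) vc.
Proof.
move=> vx.
rewrite (reindex_onto (fun Q => x |: Q) (fun P => P :\ x)); last first.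
  by move=> P /andP [_ xP]; rewrite setD1K.
rewrite /residual_weight big_distrr /=; apply: eq_big => Q; last first.
  move=> /andP [_ /eqP QxQ].
  by rewrite big_setU1 //= -QxQ setD11.
rewrite setU11 andbT; case: (boolP (x \in Q)) => xQ.
  rewrite (contraTF (residual_matching_notin vx) xQ).
  by apply/negbTE/nandP; right; apply: contraTneq xQ => <-; rewrite setD11.
by rewrite setU1K // eqxx andbT covers_once_setU1.
Qed.

Lemma vc_weight_star vc :
  vc_weight ends c w vc =
  \sum_(x | incident ends v x) kept_weight vc x * residual_weight (other x) vc.
Proof.
rewrite vc_weight_covers covers_once_at_v.
by apply: eq_bigr => x vx; rewrite covers_once_through.
Qed.

Lemma kept_weight_at_v vc x :
  incident ends v x ->
  kept_weight vc x = w x * (c x (vside x) == vc v)%:R * (c x (~~ vside x) == vc (other x))%:R.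
Proof.
rewrite /kept_weight /kept /vside /other /incident.
case: eqP => [-> _ | _ /= /eqP ->];
  by case: (c x false == _); case: (c x true == _); rewrite ?mulr1 ?mulr0.
Qed.

Lemma residual_weight_local y vc1 vc2 :
  (forall u, u != v -> u != y -> vc1 u = vc2 u) ->
  residual_weight y vc1 = residual_weight y vc2.
Proof.
move=> vc12; apply: eq_bigr => Q resQ; apply: eq_bigr => x xQ.
have avoid u : (u == v) || (u == y) -> ~~ incident ends u x.
  move=> uvy; apply: (deg_in0 _ xQ); move/forallP/(_ u)/eqP: resQ => ->.
  by rewrite -negb_or uvy.
move: (avoid v) (avoid y); rewrite !eqxx orbT /incident !negb_or.
move=> /(_ isT) /andP [v1 v2] /(_ isT) /andP [y1 y2].
by rewrite /kept_weight /kept !vc12 // eq_sym.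
Qed.

End Star.

Section NestedSums.
Variables (R : comPzRingType) (I : finType).

Lemma sum_delta (G : I -> R) k : \sum_j (j == k)%:R * G j = G k.
Proof. by rewrite (bigD1 k) //= eqxx mul1r big1 ?addr0 // => j /negbTE ->; rewrite mul0r. Qed.

Lemma sum4_mul (F G : I -> I -> R) :
  \sum_i1 \sum_i2 \sum_i3 \sum_i4 F i1 i2 * G i3 i4 =
  (\sum_i1 \sum_i2 F i1 i2) * (\sum_i3 \sum_i4 G i3 i4).
Proof.
rewrite big_distrl; apply: eq_bigr => i1 _; rewrite big_distrl; apply: eq_bigr => i2 _.
by rewrite big_distrr; apply: eq_bigr => i3 _; rewrite big_distrr.
Qed.

Lemma sum2_mulr (h : I -> R) (A : I -> I -> R) :
  \sum_i \sum_j h j * A i j = \sum_j h j * \sum_i A i j.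
Proof. by rewrite exchange_big; apply: eq_bigr => j _; rewrite big_distrr. Qed.

Lemma star_sum_orthogonal (hA hB hC : I -> R) (A B C GA GB GC : I -> I -> R) :
  \sum_j hA j * \sum_i A i j = 0 ->
  \sum_j hB j * \sum_i B i j = 0 ->
  \sum_j hC j * \sum_i C i j = 0 ->
  \sum_i \sum_ja \sum_jb \sum_jc hA ja * hB jb * hC jc *
    (GA jb jc * A i ja + GB ja jc * B i jb + GC ja jb * C i jc) = 0.
Proof.
move=> oA oB oC.
have termA : \sum_i \sum_ja \sum_jb \sum_jc (hA ja * A i ja) * (hB jb * hC jc * GA jb jc) = 0.
  by rewrite sum4_mul sum2_mulr oA mul0r.
have termB : \sum_i \sum_ja \sum_jb \sum_jc (hB jb * B i jb) * (hA ja * hC jc * GB ja jc) = 0.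
  by under eq_bigr do rewrite exchange_big; rewrite sum4_mul sum2_mulr oB mul0r.
have termC : \sum_i \sum_ja \sum_jb \sum_jc (hC jc * C i jc) * (hA ja * hB jb * GC ja jb) = 0.
  under eq_bigr do under eq_bigr do rewrite exchange_big.
  by under eq_bigr do rewrite exchange_big; rewrite sum4_mul sum2_mulr oC mul0r.
transitivity (\sum_i \sum_ja \sum_jb \sum_jc
  ((hA ja * A i ja) * (hB jb * hC jc * GA jb jc) +
   (hB jb * B i jb) * (hA ja * hC jc * GB ja jc) +
   (hC jc * C i jc) * (hA ja * hB jb * GC ja jb))).
  by do 4!(apply: eq_bigr => ? _); ring.
under eq_bigr do under eq_bigr do under eq_bigr do rewrite !big_split.
under eq_bigr do under eq_bigr do rewrite !big_split.
under eq_bigr do rewrite !big_split.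
by rewrite !big_split /= termA termB termC !addr0.
Qed.

Lemma sum4_single (F : I -> I -> I -> I -> R) k :
  (forall i1 i2 i3 i4, ~~ [&& i1 == k, i2 == k, i3 == k & i4 == k] -> F i1 i2 i3 i4 = 0) ->
  \sum_i1 \sum_i2 \sum_i3 \sum_i4 F i1 i2 i3 i4 = F k k k k.
Proof.
move=> F0; rewrite (bigD1 k) //= [X in _ + X]big1 ?addr0 => [|i1 /negbTE i1k].
  rewrite (bigD1 k) //= [X in _ + X]big1 ?addr0 => [|i2 /negbTE i2k].
    rewrite (bigD1 k) //= [X in _ + X]big1 ?addr0 => [|i3 /negbTE i3k].
      by rewrite (bigD1 k) //= big1 ?addr0 // => i4 /negbTE i4k; rewrite F0 // i4k !andbF.
    by apply: big1 => ? _; rewrite F0 // i3k !andbF.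
  by do 2!(apply: big1 => ? _); rewrite F0 // i2k andbF.
by do 3!(apply: big1 => ? _); rewrite F0 // i1k.
Qed.

End NestedSums.

(* [partner (fun j => l j != 0) k i]: some vector orthogonal to [l] and supported
   on {k, i} is nonzero at [k] (see [pivot_vec] below). *)
Definition partner (p : pred 'I_4) (k i : 'I_4) : bool := (i != k) && (p k ==> p i).

(* [lonely p k] iff [p] is the singleton {k}. *)
Definition lonely (p : pred 'I_4) (k : 'I_4) : bool := ~~ [exists i, partner p k i].

Lemma lonely_other p k i : lonely p k -> i != k -> ~~ p i.
Proof.
move=> /existsPn /(_ i) + ik; rewrite /partner ik negb_imply.
by case/andP.
Qed.

Lemma lonely_uniq p k k' : lonely p k -> lonely p k' -> k = k'.
Proof.
move=> lk lk'; apply/eqP; apply: contraT => kk'.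
move/existsPn/(_ k): lk'; rewrite /partner kk' negb_imply => /andP [pk' _].
by rewrite (negbTE (lonely_other lk _)) // eq_sym in pk'.
Qed.

Lemma card_lonely_lt4 (pa pb pc : pred 'I_4) :
  (#|[set k | [|| lonely pa k, lonely pb k | lonely pc k]]| < 4)%N.
Proof.
have lonely_le1 p : (#|[set k | lonely p k]| <= 1)%N.
  by apply/card_le1_eqP => k k'; rewrite !inE => lk lk'; rewrite (lonely_uniq lk lk').
move: (lonely_le1 pa) (lonely_le1 pb) (lonely_le1 pc).
set A := [set k | lonely pa k]; set B := [set k | lonely pb k]; set C := [set k | lonely pc k].
have -> : [set k | [|| lonely pa k, lonely pb k | lonely pc k]] = A :|: B :|: C.
  by apply/setP => k; rewrite !inE orbA.
by move: (leq_card_setU (A :|: B) C) (leq_card_setU A B) => [+ _] [+ _]; lia.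
Qed.

Lemma partners_exist (pa pb pc : pred 'I_4) :
  exists k ia ib ic,
    [/\ partner pa k ia, partner pb k ib, partner pc k ic &
        [&& pa k, pb k & pc k] -> (ia != ib) || (ib != ic)].
Proof.
pose bad := [set k | [|| lonely pa k, lonely pb k | lonely pc k]].
have [k /andP [kgood inactive] | all_active] :=
  pickP [pred k | (k \notin bad) && ~~ [&& pa k, pb k & pc k]].
  move: kgood; rewrite inE !negb_or.
  case/and3P => /negPn /existsP [ia ?] /negPn /existsP [ib ?] /negPn /existsP [ic ?].
  by exists k, ia, ib, ic; split=> //; rewrite (negbTE inactive).
have active k : k \notin bad -> [&& pa k, pb k & pc k].
  by move=> kgood; move/negbT: (all_active k); rewrite /= kgood negbK.
have full k : [&& pa k, pb k & pc k].
  apply: (active k); apply: contraT => /negPn kbad.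
  have [p [lp pactive]] : exists p, lonely p k /\ forall k', k' \notin bad -> p k'.
    by move: kbad; rewrite inE => /or3P [l|l|l];
      [exists pa | exists pb | exists pc]; split=> // k' /active /and3P [].
  (* [p] vanishes off [k], so every other point is bad too. *)
  suff badT : bad = setT.
    by move: (card_lonely_lt4 pa pb pc); rewrite -/bad badT cardsT card_ord.
  apply/setP => k'; rewrite in_setT; case: (eqVneq k' k) => [-> // | k'k].
  by apply: contraT => /pactive pk'; rewrite (negbTE (lonely_other lp k'k)) in pk'.
pose i1 := @Ordinal 4 1 isT; pose i2 := @Ordinal 4 2 isT; pose i3 := @Ordinal 4 3 isT.
case/and3P: (full i1) => pa1 _ _; case/and3P: (full i2) => _ pb2 _.
case/and3P: (full i3) => _ _ pc3.
by exists ord0, i1, i2, i3; rewrite /partner pa1 pb2 pc3 !implybT.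
Qed.

Section PivotVectors.
Variables (F : comNzRingType) (I : finType).

Definition pivot_vec (l : I -> F) (k i : I) (j : I) : F :=
  if l k == 0 then (j == k)%:R else l i * (j == k)%:R - l k * (j == i)%:R.

Lemma pivot_vec_orthogonal l k i : \sum_j pivot_vec l k i j * l j = 0.
Proof.
rewrite /pivot_vec; case: eqP => [lk0 | _]; first by rewrite sum_delta lk0.
under eq_bigr do rewrite mulrBl -!mulrA [_ * (_ * l _)]mulrCA [l k * (_ * l _)]mulrCA.
by rewrite sumrB !sum_delta mulrC subrr.
Qed.

Lemma pivot_vec_pivot l k i :
  i != k -> (l k == 0) || (l i != 0) -> pivot_vec l k i k != 0.
Proof.
rewrite /pivot_vec eqxx => ik; case: eqP => [_ _ | _ /= li0]; first exact: oner_neq0.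
by rewrite [k == i]eq_sym (negbTE ik) mulr0 subr0 mulr1.
Qed.

Lemma pivot_vec_support l k i j :
  j != k -> pivot_vec l k i j != 0 -> (l k != 0) && (j == i).
Proof.
rewrite /pivot_vec => /negbTE ->; case: (l k =P 0) => [_ | _]; first by rewrite /= eqxx.
by case: (j =P i); rewrite /= ?mulr0n ?mulr1n ?mulr0 ?mulr1 ?subr0 ?sub0r ?oppr_eq0 ?eqxx.
Qed.

End PivotVectors.

Lemma orthogonal_triple (F : idomainType) (la lb lc : 'I_4 -> F) :
  exists k (hA hB hC : 'I_4 -> F),
  [/\ \sum_j hA j * la j = 0, \sum_j hB j * lb j = 0, \sum_j hC j * lc j = 0,
      hA k * hB k * hC k != 0 &
      forall j, j != k -> hA j * hB j * hC j = 0].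
Proof.
have [k [ia [ib [ic [pa pb pc distinct]]]]] :=
  partners_exist (fun j => la j != 0) (fun j => lb j != 0) (fun j => lc j != 0).
have pivot l i : partner (fun j => l j != 0) k i -> pivot_vec l k i k != 0.
  by case/andP => ik; rewrite /= implybE negbK => /(pivot_vec_pivot ik).
exists k, (pivot_vec la k ia), (pivot_vec lb k ib), (pivot_vec lc k ic).
split; rewrite ?pivot_vec_orthogonal ?mulf_neq0 ?pivot // => j jk.
apply/eqP; apply: contraT; rewrite !mulf_eq0 !negb_or => /andP [/andP [hA hB] hC].
case/andP: (pivot_vec_support jk hA) => la0 /eqP ja.
case/andP: (pivot_vec_support jk hB) => lb0 /eqP jb.
case/andP: (pivot_vec_support jk hC) => lc0 /eqP jc.
by move: distinct; rewrite la0 lb0 lc0 -ja -jb -jc !eqxx => /(_ isT).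
Qed.

Lemma other_adj (V E : finType) (ends : E -> V * V) (g : rel V) v x :
  skeleton_is ends g -> incident ends v x -> g v (other ends v x).
Proof.
move=> skel; rewrite skel /incident /other => vx; apply/existsP; exists x.
by case: (ends x) vx => p q /=; case: (eqVneq p v) => [-> | _ /= /eqP ->]; rewrite eqxx ?orbT.
Qed.

Lemma vc_weight_neighbours (V E : finType) (ends : E -> V * V) (c : E -> bool -> nat)
    (w : E -> Cplx) (g : rel V) v vc :
  skeleton_is ends g ->
  vc_weight ends c w vc =
  \sum_(y | g v y) residual_weight ends c w v y vc * link ends c w v y (vc v) (vc y).
Proof.
move=> skel; rewrite (vc_weight_star ends c w v) (partition_big (other ends v) (g v)) => [|x];
  last exact: other_adj.
apply: eq_bigr => y _; rewrite /link big_distrr; apply: eq_bigr => x /andP [vx /eqP <-].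
by rewrite (kept_weight_at_v _ _ _ vx) mulrC.
Qed.

Lemma feasible_ext (V E : finType) (ends : E -> V * V) (c : E -> bool -> nat) vc1 vc2 :
  vc1 =1 vc2 -> feasible ends c vc1 = feasible ends c vc2.
Proof.
move=> vc12; apply: eq_existsb => P; congr (_ && _); apply: eq_forallb => x.
by rewrite /kept !vc12.
Qed.

Lemma dimension_colours (V E : finType) (ends : E -> V * V) (c : E -> bool -> nat) n :
  (n <= dimension ends c)%N ->
  exists s : 'I_n -> nat, injective s /\ forall j, feasible ends c (fun=> s j).
Proof.
rewrite /dimension; set L := filter _ _ => nL.
have ltL (j : 'I_n) : (j < size L)%N by exact: leq_trans (ltn_ord j) nL.
have uniqL : uniq L by rewrite filter_uniq // iota_uniq.
exists (fun j => nth 0%N L j); split.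
  by move=> j1 j2 /eqP; rewrite nth_uniq // => /eqP /val_inj.
by move=> j; have := mem_nth 0%N (ltL j); rewrite mem_filter => /andP [].
Qed.

Section ThreeNeighbours.
Variables (V E : finType) (ends : E -> V * V) (c : E -> bool -> nat) (w : E -> Cplx).
Variables (g : rel V) (v na nb nc : V).
Hypotheses (skel : skeleton_is ends g) (star_uniq : uniq [:: v; na; nb; nc]).
Hypothesis nbhd : forall y, g v y = (y \in [:: na; nb; nc]).
Variables (s : 'I_4 -> nat) (k0 : 'I_4).

Notation residual := (residual_weight ends c w v).
Notation link := (link ends c w v).

Definition star_colouring (jv ja jb jc : 'I_4) (u : V) : nat :=
  s (if u == v then jv else if u == na then ja else if u == nb then jb
     else if u == nc then jc else k0).

Lemma star_colouringE jv ja jb jc :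
  let col := star_colouring jv ja jb jc in
  [/\ col v = s jv, col na = s ja, col nb = s jb & col nc = s jc].
Proof.
move: star_uniq; rewrite /= !inE !negb_or -!andbA => /and5P [va vb vc ab /and3P [ac bc _]].
by rewrite /star_colouring eqxx ![na == _]eq_sym ![nb == _]eq_sym ![nc == _]eq_sym
  (negbTE va) (negbTE vb) (negbTE vc) (negbTE ab) (negbTE ac) (negbTE bc) !eqxx.
Qed.

Definition link_vec (y : V) (j : 'I_4) : Cplx := \sum_jv link y (s jv) (s j).

Definition star_sum (hA hB hC : 'I_4 -> Cplx) : Cplx :=
  \sum_jv \sum_ja \sum_jb \sum_jc
    hA ja * hB jb * hC jc * vc_weight ends c w (star_colouring jv ja jb jc).

Lemma vc_weight_star_colouring jv ja jb jc :
  vc_weight ends c w (star_colouring jv ja jb jc) =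
  residual na (star_colouring k0 k0 jb jc) * link na (s jv) (s ja) +
  residual nb (star_colouring k0 ja k0 jc) * link nb (s jv) (s jb) +
  residual nc (star_colouring k0 ja jb k0) * link nc (s jv) (s jc).
Proof.
rewrite (@vc_weight_neighbours _ _ ends c w g v _ skel) (eq_bigl _ _ nbhd) -big_uniq;
  last by case/andP: star_uniq.
rewrite !big_cons big_nil /= addr0 addrA.
have [-> -> -> ->] := star_colouringE jv ja jb jc.
by congr (_ * _ + _ * _ + _ * _); apply: residual_weight_local => u uv uy;
  rewrite /star_colouring (negbTE uv) (negbTE uy).
Qed.

Lemma star_sum_eq0 hA hB hC :
  \sum_j hA j * link_vec na j = 0 ->
  \sum_j hB j * link_vec nb j = 0 ->
  \sum_j hC j * link_vec nc j = 0 ->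
  star_sum hA hB hC = 0.
Proof.
move=> oA oB oC.
rewrite -(star_sum_orthogonal
  (fun jb jc => residual na (star_colouring k0 k0 jb jc))
  (fun ja jc => residual nb (star_colouring k0 ja k0 jc))
  (fun ja jb => residual nc (star_colouring k0 ja jb k0)) oA oB oC).
by do 4!(apply: eq_bigr => ? _); rewrite vc_weight_star_colouring.
Qed.

Lemma star_sum_ghz hA hB hC :
  GHZ ends c w -> injective s -> feasible ends c (fun=> s k0) ->
  (forall k, k != k0 -> hA k * hB k * hC k = 0) ->
  star_sum hA hB hC = hA k0 * hB k0 * hC k0.
Proof.
move=> [ghz_mono ghz_mixed] sinj feas0 off0.
rewrite /star_sum (@sum4_single _ _ _ k0) => [|jv ja jb jc not_k0].
  have col0 : star_colouring k0 k0 k0 k0 =1 (fun=> s k0).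
    by move=> u; rewrite /star_colouring; do !case: ifP.
  by rewrite ghz_mono ?mulr1 ?(feasible_ext _ _ col0) // => u u'; rewrite !col0.
case: (boolP [&& ja == jv, jb == jv & jc == jv]) => [/and3P [/eqP ja_ /eqP jb_ /eqP jc_] | mixed].
  by move: not_k0; rewrite ja_ jb_ jc_ !andbb => /off0 ->; rewrite mul0r.
rewrite ghz_mixed ?mulr0 // => mono; move: mixed.
have [cv ca cb cc] := star_colouringE jv ja jb jc.
move: (mono na v) (mono nb v) (mono nc v); rewrite cv ca cb cc.
by move=> /sinj -> /sinj -> /sinj ->; rewrite !eqxx.
Qed.

End ThreeNeighbours.

Theorem theorem6 (V : finType) (g : rel V) :
  simple_graph g -> min_degree_is g 3 ->
  forall (E : finType) (ends : E -> V * V) (c : E -> bool -> nat) (w : E -> Cplx),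
    no_self_loops ends -> skeleton_is ends g ->
    GHZ ends c w ->
    (dimension ends c <= 3)%N.
Proof.
move=> [_ girr] [_ [v deg3]] E ends c w _ skel ghz.
have [na [nb [nc Nv]]] : exists na nb nc, enum [set u | g v u] = [:: na; nb; nc].
  move: deg3; rewrite /degree cardE.
  by case: (enum _) => [|na [|nb [|nc [|]]]] // _; exists na, nb, nc.
have nbhd y : g v y = (y \in [:: na; nb; nc]) by rewrite -Nv mem_enum inE.
have star_uniq : uniq [:: v; na; nb; nc] by rewrite cons_uniq -nbhd girr -Nv enum_uniq.
rewrite leqNgt; apply/negP => /dimension_colours [s [sinj feas]].
have [k0 [hA [hB [hC [oA oB oC nz off0]]]]] := orthogonal_triple
  (link_vec ends c w v s na) (link_vec ends c w v s nb) (link_vec ends c w v s nc).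
move: nz; rewrite -(star_sum_ghz star_uniq ghz sinj (feas k0) off0).
by rewrite (star_sum_eq0 skel star_uniq nbhd k0 oA oB oC) eqxx.
Qed.
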